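(* Let $\mathcal K^*$ be a reasonable ordered Fraïssé class in the language $L\cup\{<\}$ with $L$-reduct $\mathcal K$, and assume $G_{\mathcal K^*}$ is oligomorphic. If $G_{\mathcal K^*}$ is a normal subgroup of $G_\mathcal K$, then it has finite index in $G_\mathcal K$.
   Context: A Fraïssé class is a class of finite structures that is hereditary, has joint embedding and amalgamation, and contains arbitrarily large finite structures; $\mathrm{Flim}$ denotes the Fraïssé limit and $G_\mathcal K=\mathrm{Aut}(\mathrm{Flim}(\mathcal K))$. An ordered class $\mathcal K^*$ consists of structures $(A,<^A)$ with $<^A$ a linear order on an $L$-structure $A$ ($\mathcal K^*$-admissible orders); its $L$-reduct is $\{A:(A,<^A)\in\mathcal K^*\}$. $\mathcal K^*$ is reasonable if for all $A,B$ in the reduct, every embedding $a:A\to B$ and every admissible $<^A$ on $A$, there is an admissible $<^B$ on $B$ making $a$ an embedding $(A,<^A)\to(B,<^B)$. For reasonable $\mathcal K^*$ one has $\mathrm{Flim}(\mathcal K^* )=(\mathrm{Flim}(\mathcal K),<^* )$ for some linear order $<^*$, and $G_{\mathcal K^*}$ is thereby identified with the subgroup of $G_\mathcal K$ preserving $<^*$. A permutation group on $F$ is oligomorphic if for every $n$ its diagonal action on $F^n$ has finitely many orbits. *)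

From mathcomp Require Import all_boot.
Set Implicit Arguments. Unset Strict Implicit. Unset Printing Implicit Defensive.

Record lang := Lang {
  rsym : Type; rar : rsym -> nat;
  fsym : Type; far : fsym -> nat }.

Record structure (L : lang) (X : Type) := Struct {
  rinterp : forall r : rsym L, ('I_(rar r) -> X) -> Prop;
  finterp : forall f : fsym L, ('I_(far f) -> X) -> X }.
Arguments rinterp {L X} s r _.
Arguments finterp {L X} s f _.

Definition is_embedding (L : lang) (X Y : Type) (SX : structure L X)
  (SY : structure L Y) (h : X -> Y) : Prop :=
  injective h /\
  (forall r (xs : 'I_(rar r) -> X), rinterp SY r (h \o xs) <-> rinterp SX r xs) /\
  (forall f (xs : 'I_(far f) -> X), h (finterp SX f xs) = finterp SY f (h \o xs)).

Definition is_automorphism (L : lang) (X : Type) (S : structure L X) (s : X -> X) : Prop :=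
  is_embedding S S s /\ bijective s.

Definition sclass (L : lang) := forall A : finType, structure L A -> Prop.

Definition hereditary (L : lang) (K : sclass L) : Prop :=
  forall (A B : finType) (SA : structure L A) (SB : structure L B) (h : A -> B),
    is_embedding SA SB h -> K B SB -> K A SA.

Definition joint_embedding (L : lang) (K : sclass L) : Prop :=
  forall (A B : finType) (SA : structure L A) (SB : structure L B),
    K A SA -> K B SB ->
    exists (C : finType) (SC : structure L C) (f : A -> C) (g : B -> C),
      K C SC /\ is_embedding SA SC f /\ is_embedding SB SC g.

Definition amalgamation (L : lang) (K : sclass L) : Prop :=
  forall (A B C : finType) (SA : structure L A) (SB : structure L B)
         (SC : structure L C) (f : A -> B) (g : A -> C),
    K A SA -> K B SB -> K C SC -> is_embedding SA SB f -> is_embedding SA SC g ->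
    exists (D : finType) (SD : structure L D) (f' : B -> D) (g' : C -> D),
      [/\ K D SD, is_embedding SB SD f', is_embedding SC SD g'
        & forall a, f' (f a) = g' (g a)].

Definition arbitrarily_large (L : lang) (K : sclass L) : Prop :=
  forall n : nat, exists (A : finType) (SA : structure L A), K A SA /\ n <= #|A|.

Definition FraisseClass (L : lang) (K : sclass L) : Prop :=
  [/\ hereditary K, joint_embedding K, amalgamation K & arbitrarily_large K].

(* Fraisse limit of K: a countable structure, locally finite, ultrahomogeneous,
   whose age (finite structures embeddable in it) is exactly K. *)
Definition FraisseLimit (L : lang) (K : sclass L) (M : countType) (S : structure L M) : Prop :=
  [/\ (forall (A : finType) (SA : structure L A),
          K A SA <-> exists h : A -> M, is_embedding SA S h),
      (forall s : seq M, exists (A : finType) (SA : structure L A) (h : A -> M),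
          is_embedding SA S h /\ forall x, x \in s -> exists a, h a = x)
    & (forall (A : finType) (SA : structure L A) (f g : A -> M),
          is_embedding SA S f -> is_embedding SA S g ->
          exists s, is_automorphism S s /\ forall a, s (f a) = g a)].

(* The language L u {<}: a new binary relation symbol (None). *)
Definition Lplus (L : lang) : lang :=
  Lang (fun o : option (rsym L) => if o is Some r then rar r else 2) (@far L).

Definition expand (L : lang) (X : Type) (S : structure L X) (lt : X -> X -> Prop)
  : structure (Lplus L) X :=
  @Struct (Lplus L) X
    (fun o => match o return ('I_(@rar (Lplus L) o) -> X) -> Prop with
              | Some r => rinterp S r
              | None => fun xs : 'I_2 -> X => lt (xs ord0) (xs ord_max)
              end)
    (finterp S).

Definition restrict (L : lang) (X : Type) (T : structure (Lplus L) X) : structure L X :=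
  @Struct L X (fun r => rinterp T (Some r)) (finterp T).

Definition ltof (L : lang) (X : Type) (T : structure (Lplus L) X) (x y : X) : Prop :=
  rinterp T (None : rsym (Lplus L)) (fun i : 'I_2 => if nat_of_ord i == 0 then x else y).

Definition strict_linear (X : Type) (lt : X -> X -> Prop) : Prop :=
  [/\ forall x, ~ lt x x,
      forall x y z, lt x y -> lt y z -> lt x z
    & forall x y, x <> y -> lt x y \/ lt y x].

Definition oclass (L : lang) := forall A : finType, structure L A -> (A -> A -> Prop) -> Prop.

Definition is_ordered (L : lang) (Ks : oclass L) : Prop :=
  forall (A : finType) (SA : structure L A) lt, Ks A SA lt -> strict_linear lt.

Definition oclass_to_class (L : lang) (Ks : oclass L) : sclass (Lplus L) :=
  fun A T => Ks A (restrict T) (ltof T).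

Definition reduct (L : lang) (Ks : oclass L) : sclass L :=
  fun A SA => exists lt, Ks A SA lt.

Definition reasonable (L : lang) (Ks : oclass L) : Prop :=
  forall (A B : finType) (SA : structure L A) (SB : structure L B) (a : A -> B),
    reduct Ks SA -> reduct Ks SB -> is_embedding SA SB a ->
    forall ltA, Ks A SA ltA ->
      exists ltB, Ks B SB ltB /\ is_embedding (expand SA ltA) (expand SB ltB) a.

(* Permutation groups given as predicates on maps M -> M. *)
Definition oligomorphic (M : Type) (H : (M -> M) -> Prop) : Prop :=
  forall n : nat, exists (k : nat) (reps : 'I_k -> 'I_n -> M),
    forall x : 'I_n -> M, exists (i : 'I_k) (h : M -> M),
      H h /\ forall j, x j = h (reps i j).

Definition normal_in (M : Type) (H G : (M -> M) -> Prop) : Prop :=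
  forall g g' h : M -> M, G g -> cancel g g' -> cancel g' g -> H h -> H (g \o h \o g').

Definition finite_index (M : Type) (H G : (M -> M) -> Prop) : Prop :=
  exists (k : nat) (reps : 'I_k -> M -> M),
    (forall i, G (reps i)) /\
    forall g, G g -> exists (i : 'I_k) (h : M -> M), H h /\ forall x, g x = reps i (h x).

From mathcomp Require Import all_boot.
From Stdlib Require Import FunctionalExtensionality ClassicalEpsilon.
Set Implicit Arguments. Unset Strict Implicit. Unset Printing Implicit Defensive.

(* Let G be the automorphism group of the L-structure S and H <= G the
   stabiliser of the linear order ltM, i.e. the automorphism group of the
   expansion (S, ltM).  Each g in G transports ltM to the relation
   x <_g y :<-> g^-1 x < g^-1 y, and two elements g, g' of G lie in the same
   left coset of H exactly when <_g = <_g'.  If H is normal in G, every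
   transported order <_g is again H-invariant; if H is oligomorphic, an
   H-invariant binary relation is determined by its values on a fixed finite
   set of representatives of the H-orbits on pairs, so there are only finitely
   many transported orders and hence only finitely many cosets.

   Only
   normality and oligomorphicity (on pairs) are used. *)

Section Automorphisms.
Variables (L : lang) (X : Type).

Lemma aut_id (T : structure L X) : is_automorphism T id.
Proof. by split; [split=> //; split | exists id]. Qed.

Lemma aut_inv (T : structure L X) s s' :
  is_automorphism T s -> cancel s s' -> cancel s' s -> is_automorphism T s'.
Proof.
move=> [[_ [Hr Hf]] _] ss' s's; split; last by exists s.
have s_s' (n : nat) (xs : 'I_n -> X) : s \o (s' \o xs) = xs.
  by apply: functional_extensionality => i /=; rewrite s's.
split; first exact: can_inj s's.
split=> [r xs | f xs].
- by have := Hr r (s' \o xs); rewrite s_s' => H; split => /H.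
- by have := Hf f (s' \o xs); rewrite s_s' => <-; rewrite ss'.
Qed.

Lemma aut_comp (T : structure L X) a b :
  is_automorphism T a -> is_automorphism T b -> is_automorphism T (a \o b).
Proof.
move=> [[ia [Hra Hfa]] [a' aa' a'a]] [[ib [Hrb Hfb]] [b' bb' b'b]].
split; last by exists (b' \o a') => x /=; rewrite ?aa' ?bb' ?b'b ?a'a.
split; first by move=> x y /= /ia /ib.
split=> [r xs | f xs /=]; last by rewrite Hfb Hfa.
by have := Hra r (b \o xs); have := Hrb r xs; move=> H1 H2; split => [/H2/H1|/H1/H2].
Qed.

Lemma aut_expandP (S : structure L X) (lt : X -> X -> Prop) h :
  is_automorphism (expand S lt) h <->
  is_automorphism S h /\ forall x y, lt (h x) (h y) <-> lt x y.
Proof.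
split=> [[[ih [Hr Hf]] bh] | [[[ih [Hr Hf]] bh] Hlt]].
- split; first by do 2!split=> //; split=> [r xs | f xs]; [exact: (Hr (Some r)) | exact: Hf].
  by move=> x y; exact: (Hr None (fun i : 'I_2 => if nat_of_ord i == 0 then x else y)).
- do 2!split=> //; split=> [[r|] xs | f xs]; [exact: Hr | exact: Hlt | exact: Hf].
Qed.

End Automorphisms.

Section Transport.
Variable M : Type.

Definition transport (g : M -> M) (rel : M -> M -> Prop) (x y : M) : Prop :=
  exists u v, [/\ g u = x, g v = y & rel u v].

Lemma transportE g gi rel x y :
  cancel g gi -> cancel gi g -> transport g rel x y <-> rel (gi x) (gi y).
Proof.
move=> ggi gig; split=> [[u [v [<- <- ruv]]] | rxy]; first by rewrite !ggi.
by exists (gi x), (gi y); rewrite !gig.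
Qed.

Definition invariant (H : (M -> M) -> Prop) (rel : M -> M -> Prop) : Prop :=
  forall h a b, H h -> (rel (h a) (h b) <-> rel a b).

End Transport.

Lemma transport_invariant (L : lang) (M : Type) (S : structure L M)
    (lt : M -> M -> Prop) g :
  normal_in (is_automorphism (expand S lt)) (is_automorphism S) ->
  is_automorphism S g ->
  invariant (is_automorphism (expand S lt)) (transport g lt).
Proof.
move=> normal Sg h a b Hh.
have [gi ggi gig] := Sg.2.
have /aut_expandP [_ conj_lt] := normal gi g h (aut_inv Sg ggi gig) gig ggi Hh.
rewrite !(@transportE _ _ _ lt _ _ ggi gig).
by have := conj_lt (gi a) (gi b); rewrite /= !gig.
Qed.

Lemma aut_expand_of_same_transport (L : lang) (M : Type) (S : structure L M)
    (lt : M -> M -> Prop) g g' gi' :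
  is_automorphism S g -> is_automorphism S g' -> cancel g' gi' -> cancel gi' g' ->
  (forall x y, transport g lt x y <-> transport g' lt x y) ->
  is_automorphism (expand S lt) (gi' \o g).
Proof.
move=> Sg Sg' g'gi' gi'g' same; apply/aut_expandP.
split; first exact: aut_comp (aut_inv Sg' g'gi' gi'g') Sg.
have [gi ggi gig] := Sg.2.
move=> x y /=.
by rewrite -(@transportE _ _ _ lt _ _ g'gi' gi'g') -same (@transportE _ _ _ lt _ _ ggi gig) !ggi.
Qed.

Section InvariantRelations.
Variables (M : Type) (H : (M -> M) -> Prop) (k : nat) (reps : 'I_k -> 'I_2 -> M).

(* reps lists representatives of all H-orbits on pairs, as provided by
   oligomorphicity of H for n = 2. *)
Hypothesis orbits : forall x : 'I_2 -> M,
  exists (i : 'I_k) (h : M -> M), H h /\ forall j, x j = h (reps i j).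

Definition rel_type (rel : M -> M -> Prop) : {ffun 'I_k -> bool} :=
  [ffun i => if excluded_middle_informative (rel (reps i ord0) (reps i ord_max))
             then true else false].

Lemma rel_typeP rel i : rel_type rel i <-> rel (reps i ord0) (reps i ord_max).
Proof. by rewrite ffunE; case: excluded_middle_informative. Qed.

Lemma invariant_rel_of_type rel1 rel2 :
  invariant H rel1 -> invariant H rel2 -> rel_type rel1 = rel_type rel2 ->
  forall x y, rel1 x y <-> rel2 x y.
Proof.
move=> inv1 inv2 same_type x y.
have [i [h [Hh xy]]] := orbits (fun j : 'I_2 => if nat_of_ord j == 0 then x else y).
have -> : x = h (reps i ord0) by exact: xy ord0.
have -> : y = h (reps i ord_max) by exact: xy ord_max.
rewrite inv1 // inv2 //.
by rewrite -!rel_typeP same_type.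
Qed.

End InvariantRelations.

(* Finite index criterion: if a map c from G to a finite type takes equal
   values only on elements of the same left coset of H, then H has finite
   index in G; the cosets are represented by chosen preimages of the values. *)
Lemma finite_index_of_classifier (M : Type) (H G : (M -> M) -> Prop)
    (T : finType) (c : (M -> M) -> T) :
  G id ->
  (forall g g', G g -> G g' -> c g = c g' ->
     exists h, H h /\ forall x, g x = g' (h x)) ->
  finite_index H G.
Proof.
move=> Gid same_coset.
pose rep t := match excluded_middle_informative (exists g, G g /\ c g = t) with
  | left e => proj1_sig (constructive_indefinite_description _ e)
  | right _ => id end.
have repP t : G (rep t) /\ ((exists g, G g /\ c g = t) -> c (rep t) = t).
  rewrite /rep; case: excluded_middle_informative => [e | ne]; last by split=> // /ne.
  by case: (constructive_indefinite_description _ e) => g [].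
exists #|T|, (fun i => rep (enum_val i)); split=> [i | g Gg]; first exact: (repP _).1.
exists (enum_rank (c g)); rewrite enum_rankK.
have [Grep crep] := repP (c g).
by apply: same_coset => //; rewrite crep //; exists g.
Qed.

Theorem mainTheorem17 (L : lang) (Ks : oclass L) (M : countType)
  (S : structure L M) (ltM : M -> M -> Prop) :
  is_ordered Ks ->
  FraisseClass (oclass_to_class Ks) ->
  reasonable Ks ->
  FraisseLimit (reduct Ks) S ->
  FraisseLimit (oclass_to_class Ks) (expand S ltM) ->
  oligomorphic (is_automorphism (expand S ltM)) ->
  normal_in (is_automorphism (expand S ltM)) (is_automorphism S) ->
  finite_index (is_automorphism (expand S ltM)) (is_automorphism S).
Proof.
move=> _ _ _ _ _ /(_ 2) [k [reps orbits]] normal.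
pose coset_type g := rel_type reps (transport g ltM).
apply: (finite_index_of_classifier (c := coset_type) (aut_id S)).
move=> g g' Sg Sg' same_type.
have [gi' g'gi' gi'g'] := Sg'.2.
exists (gi' \o g); split; last by move=> x /=; rewrite gi'g'.
apply: (aut_expand_of_same_transport Sg Sg' g'gi' gi'g').
by apply: (invariant_rel_of_type orbits _ _ same_type); apply: transport_invariant.
Qed.
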